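(* Let $A$ be a real $k\times n$ matrix and let $W$ be a nonnegative diagonal $n\times n$ matrix with trace $1$. Then there exists a $k$-element set $J\subseteq[n]$ such that \[ |\det A_J|^{1/k}\ge\sqrt{k/e}\cdot|\det AWA^T|^{1/(2k)} . \]
   Context: $[n]=\{1,\dots,n\}$; $A_J$ denotes the $k\times k$ submatrix of $A$ consisting of the columns indexed by $J$. *)

From HB Require Import structures.
From mathcomp Require Import all_boot all_order all_algebra.
From mathcomp Require Import reals sequences exp.
Set Implicit Arguments. Unset Strict Implicit. Unset Printing Implicit Defensive.
Import Order.TTheory GRing.Theory Num.Theory.
Local Open Scope ring_scope.

(* A_J : the k x k submatrix of A : 'M_(k,n) consisting of the columns indexed
   by J, taken in increasing order (enum of 'I_n is increasing).  Only
   meaningful when #|J| = k; columns beyond #|J| are filled with 0. *)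
Definition colsubset (R : nzRingType) (k n : nat) (A : 'M[R]_(k, n))
  (J : {set 'I_n}) : 'M[R]_k :=
  \matrix_(i < k, j < k)
    odflt 0 (omap (fun j' : 'I_#|J| => A i (enum_val j')) (insub (val j))).

From HB Require Import structures.
From mathcomp Require Import all_boot all_order all_algebra all_fingroup.
From mathcomp Require Import reals sequences exp.
From mathcomp Require Import ring.
Import Order.TTheory GRing.Theory Num.Theory.
Local Open Scope ring_scope.
Set Implicit Arguments. Unset Strict Implicit. Unset Printing Implicit Defensive.

(* Weighted Cauchy-Binet: det (A W A^T) = sum over k-subsets J of w_J det (A_J)^2 with
   w_J = prod_(j in J) w_j.  Expanding (sum_j w_j)^k = 1 produces every w_J exactly k!
   times, so sum_J w_J <= 1/k!.  For J maximizing |det A_J| this gives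
   det (A W A^T) <= det (A_J)^2 / k! <= (e/k)^k det (A_J)^2, since e^k >= k^k / k!;
   taking 2k-th roots yields the bound. *)

Lemma imset_card_inj k n (f : 'I_k -> 'I_n) : #|f @: setT| = k -> injective f.
Proof.
move=> card_imf i j; apply: (imset_injP _ _ _) => //; rewrite ?inE //.
by rewrite card_imf cardsT card_ord.
Qed.

Lemma sum_injective_ffun_by_imset (V : nmodType) k n (F : {ffun 'I_k -> 'I_n} -> V) :
  \sum_(f : {ffun 'I_k -> 'I_n} | injectiveb f) F f =
  \sum_(J : {set 'I_n} | #|J| == k) \sum_(f : {ffun 'I_k -> 'I_n} | f @: setT == J) F f.
Proof.
rewrite (partition_big (fun f : {ffun 'I_k -> 'I_n} => f @: setT) (fun J => #|J| == k)) /=.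
  apply: eq_bigr => J /eqP cardJ; apply: eq_bigl => f.
  by apply: andb_idl => /eqP imf; apply/injectiveP/imset_card_inj; rewrite imf.
by move=> f /injectiveP f_inj; rewrite card_imset // cardsT card_ord.
Qed.

Definition enum_ord n k (J : {set 'I_n}) (cardJ : #|J| = k) (i : 'I_k) : 'I_n :=
  enum_val (cast_ord (esym cardJ) i).

Section EnumOrd.
Variables (n k : nat) (J : {set 'I_n}) (cardJ : #|J| = k).
Local Notation g := (enum_ord cardJ).

Lemma enum_ord_inj : injective g.
Proof. by move=> i j /enum_val_inj /cast_ord_inj. Qed.

Lemma enum_ord_imset : g @: setT = J.
Proof.
apply/eqP; rewrite eqEcard card_imset; last exact: enum_ord_inj.
rewrite cardsT card_ord cardJ leqnn andbT.
by apply/subsetP => _ /imsetP [i _ ->]; exact: enum_valP.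
Qed.

Lemma colsubset_enum_ord (R : nzRingType) (A : 'M[R]_(k, n)) :
  colsubset A J = colsub g A.
Proof.
apply/matrixP => i j; rewrite !mxE.
have j_lt : (val j < #|J|)%N by rewrite cardJ ltn_ord.
case: insubP => [j' _ val_j' /= | ]; last by rewrite j_lt.
by congr (A i (enum_val _)); apply: val_inj.
Qed.

Lemma prod_enum_ord_perm (R : comPzSemiRingType) (w : 'I_n -> R) (s : 'S_k) :
  \prod_i w (g (s i)) = \prod_(j in J) w j.
Proof.
rewrite -[in RHS]enum_ord_imset big_imset /=; last by move=> i j _ _; exact: enum_ord_inj.
by rewrite [RHS](reindex_inj (@perm_inj _ s)); apply: eq_bigl => i; rewrite inE.
Qed.

Lemma sum_ffun_imset (V : nmodType) (F : {ffun 'I_k -> 'I_n} -> V) :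
  \sum_(f : {ffun 'I_k -> 'I_n} | f @: setT == J) F f = \sum_(s : 'S_k) F [ffun i => g (s i)].
Proof.
rewrite -(big_imset _ (h := fun s : 'S_k => [ffun i => g (s i)])) /=; last first.
  move=> s t _ _ /ffunP gst; apply/permP => i.
  by have := gst i; rewrite !ffunE => /enum_ord_inj.
apply: eq_big => // f; apply/eqP/imsetP => [imf | [s _ ->]].
  have f_in i : f i \in J by rewrite -imf imset_f ?inE.
  pose t i := cast_ord cardJ (enum_rank_in (f_in i) (f i)).
  have gt i : g (t i) = f i by rewrite /enum_ord /t cast_ordK enum_rankK_in.
  have t_inj : injective t.
    by move=> i j tij; apply: (imset_card_inj (f := f)); rewrite ?imf // -!gt tij.
  by exists (perm t_inj); rewrite ?inE //; apply/ffunP => i; rewrite ffunE permE gt.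
rewrite -[RHS]enum_ord_imset; apply/setP => j.
apply/imsetP/imsetP => [[i _ ->] | [i _ ->]].
  by exists (s i); rewrite ?ffunE.
by exists (s^-1 i)%g; rewrite ?ffunE ?permKV.
Qed.

End EnumOrd.

Section CauchyBinet.
Variables (R : comNzRingType) (k n : nat) (A : 'M[R]_(k, n)).

Lemma det_colsub_perm (g : 'I_k -> 'I_n) (s : 'S_k) :
  \det (colsub (g \o s) A) = (-1) ^+ s * \det (colsub g A).
Proof.
by rewrite colsub_comp -col_permEsub col_permE det_mulmx det_perm odd_permV mulrC.
Qed.

Lemma det_colsub_noninj (g : 'I_k -> 'I_n) : ~~ injectiveb g -> \det (colsub g A) = 0.
Proof.
case/injectivePn => i [j ij gij]; rewrite -det_tr.
by apply: (determinant_alternate ij) => l; rewrite !mxE gij.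
Qed.

Lemma det_mulmx_diag_trmx_expand (d : 'rV[R]_n) :
  \det (A *m diag_mx d *m A^T) =
  \sum_(f : {ffun 'I_k -> 'I_n}) (\prod_i (d 0 (f i) * A i (f i))) * \det (colsub f A).
Proof.
have entry i j : (A *m diag_mx d *m A^T) i j = \sum_l A i l * d 0 l * A j l.
  by rewrite mul_mx_diag !mxE; apply: eq_bigr => l _; rewrite !mxE.
under [RHS]eq_bigr => f _ do rewrite -det_tr.
rewrite /determinant.
under [LHS]eq_bigr => s _ do
  rewrite (eq_bigr _ (fun i _ => entry i (s i))) bigA_distr_bigA big_distrr /=.
rewrite exchange_big /=; apply: eq_bigr => f _; rewrite big_distrr /=.
apply: eq_bigr => s _; rewrite mulrCA -big_split; congr (_ * _).
by apply: eq_bigr => i _; rewrite !mxE [A i _ * _]mulrC.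
Qed.

Lemma cauchy_binet_diag (d : 'rV[R]_n) :
  \det (A *m diag_mx d *m A^T) =
  \sum_(J : {set 'I_n} | #|J| == k) (\prod_(j in J) d 0 j) * \det (colsubset A J) ^+ 2.
Proof.
rewrite det_mulmx_diag_trmx_expand (bigID (fun f : {ffun 'I_k -> 'I_n} => injectiveb f)) /=.
rewrite [X in _ + X]big1 ?addr0; last first.
  by move=> f /det_colsub_noninj ->; rewrite mulr0.
rewrite sum_injective_ffun_by_imset; apply: eq_bigr => J /eqP cardJ.
rewrite sum_ffun_imset (colsubset_enum_ord cardJ).
set g := enum_ord cardJ; set G := colsub g A.
have detG : \det G = \sum_(s : 'S_k) (-1) ^+ s * \prod_i A i (g (s i)).
  by apply: eq_bigr => s _; congr (_ * _); apply: eq_bigr => i _; rewrite mxE.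
rewrite expr2 {2}detG !mulr_sumr; apply: eq_bigr => s _.
have -> : colsub [ffun i => g (s i)] A = colsub (g \o s) A.
  by apply/matrixP => i j; rewrite !mxE ffunE.
have -> : \prod_i (d 0 ([ffun i => g (s i)] i) * A i ([ffun i => g (s i)] i)) =
          (\prod_i d 0 (g (s i))) * \prod_i A i (g (s i)).
  by rewrite -big_split; apply: eq_bigr => i _; rewrite ffunE.
rewrite det_colsub_perm prod_enum_ord_perm -/G.
by move: (\prod_(j in J) _) (\prod_i _) (\det G) ((-1) ^+ s : R) => a b c e; ring.
Qed.

End CauchyBinet.

Definition elem_sym (R : pzSemiRingType) n k (w : 'I_n -> R) : R :=
  \sum_(J : {set 'I_n} | #|J| == k) \prod_(j in J) w j.

Lemma fact_mul_elem_sym_le (R : numDomainType) n k (w : 'I_n -> R) :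
  (forall l, 0 <= w l) -> k`!%:R * elem_sym k w <= (\sum_l w l) ^+ k.
Proof.
move=> w_ge0.
have -> : k`!%:R * elem_sym k w =
          \sum_(f : {ffun 'I_k -> 'I_n} | injectiveb f) \prod_i w (f i).
  rewrite sum_injective_ffun_by_imset mulr_sumr; apply: eq_bigr => J /eqP cardJ.
  have perm_term (s : 'S_k) :
      \prod_i w ([ffun i => enum_ord cardJ (s i)] i) = \prod_(j in J) w j.
    by rewrite -(prod_enum_ord_perm cardJ w s); apply: eq_bigr => i _; rewrite ffunE.
  by rewrite sum_ffun_imset (eq_bigr _ (fun s _ => perm_term s)) sumr_const card_Sn mulr_natl.
rewrite -[k in _ ^+ k]card_ord -prodr_const bigA_distr_bigA /=.
rewrite [X in _ <= X](bigID (fun f : {ffun 'I_k -> 'I_n} => injectiveb f)) /= lerDl.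
by apply: sumr_ge0 => f _; apply: prodr_ge0.
Qed.

Lemma det_mulmx_diag_trmx_bound (R : realDomainType) k n (A : 'M[R]_(k, n))
    (d : 'rV[R]_n) (D : R) :
  (forall l, 0 <= d 0 l) ->
  (forall J : {set 'I_n}, #|J| == k -> `|\det (colsubset A J)| <= D) ->
  0 <= \det (A *m diag_mx d *m A^T) <= elem_sym k (d 0) * D ^+ 2.
Proof.
move=> d_ge0 le_det_D; rewrite cauchy_binet_diag /elem_sym mulr_suml.
apply/andP; split; first by rewrite sumr_ge0 // => J _; rewrite mulr_ge0 ?prodr_ge0 ?sqr_ge0.
apply: ler_sum => J card_J; rewrite ler_wpM2l ?prodr_ge0 // -real_normK ?num_real //.
have D_ge0 : 0 <= D by apply: le_trans (le_det_D J card_J).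
by rewrite ler_sqr ?nnegrE ?normr_ge0 //; apply: le_det_D.
Qed.

Lemma expn_div_expR1_le_fact (R : realType) k : (k%:R / expR 1) ^+ k <= k`!%:R :> R.
Proof.
case: k => [|k]; first by rewrite expr0 fact0.
have : k.+1%:R ^+ k.+1 / k.+1`!%:R <= expR 1 ^+ k.+1 :> R.
  rewrite -expRM_natl mulr1; apply: le_trans (expR_ge1Dxn k (ler0n _ _)).
  by rewrite lerDr.
rewrite ler_pdivrMr ?ltr0n ?fact_gt0 // => le_kk_efact.
by rewrite expr_div_n ler_pdivrMr ?exprn_gt0 ?expR_gt0 // mulrC.
Qed.

Lemma sqrt_mul_root_le (R : realType) k (c X D : R) :
  (0 < k)%N -> 0 <= c -> 0 <= X -> 0 <= D -> c ^+ k * X <= D ^+ 2 ->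
  Num.sqrt c * X `^ (2 * k)%:R^-1 <= D `^ k%:R^-1.
Proof.
move=> k_gt0 c_ge0 X_ge0 D_ge0 le_cX_D.
have k2_gt0 : (0 < 2 * k)%N by rewrite muln_gt0.
rewrite -(ler_pXn2r k2_gt0) ?nnegrE ?mulr_ge0 ?sqrtr_ge0 ?powR_ge0 //.
rewrite exprMn exprM sqr_sqrtr // -!powR_mulrn ?powR_ge0 // -!powRrM.
have k_neq0 : k%:R != 0 :> R by rewrite pnatr_eq0 -lt0n.
have k2_neq0 : (2 * k)%:R != 0 :> R by rewrite pnatr_eq0 -lt0n.
rewrite mulVf // powRr1 //.
by rewrite natrM mulrCA mulVf // mulr1 !powR_mulrn.
Qed.

Theorem lemma3p2 (R : realType) (k n : nat) (A : 'M[R]_(k, n)) (W : 'M[R]_n) :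
  (k <= n)%N ->
  is_diag_mx W ->
  (forall i, 0 <= W i i) ->
  \tr W = 1 ->
  exists J : {set 'I_n}, #|J| = k /\
    Num.sqrt (k%:R / expR 1) * `|\det (A *m W *m A^T)| `^ ((2 * k)%:R^-1)
      <= `|\det (colsubset A J)| `^ (k%:R^-1).
Proof.
move=> le_kn /diag_mxP [d ->] W_ge0 trW.
have d_ge0 l : 0 <= d 0 l by have := W_ge0 l; rewrite mxE eqxx mulr1n.
have sum_d : \sum_l d 0 l = 1 by rewrite -trW mxtrace_diag.
have [k0 | k_gt0] := posnP k.
  by subst k; exists set0; rewrite cards0 mul0r sqrtr0 mul0r powR_ge0.
pose J1 := [set widen_ord le_kn i | i : 'I_k].
have card_J1 : #|J1| == k.
  by rewrite /J1 card_imset ?card_ord // => i j [] /val_inj.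
have [J0 /eqP card_J0 J0_max] :=
  @arg_maxP _ _ _ J1 (fun J => #|J| == k) (fun J => `|\det (colsubset A J)|) card_J1.
exists J0; split => //.
have /andP [det_ge0 le_det_esym] := det_mulmx_diag_trmx_bound d_ge0 J0_max.
have esym_ge0 : 0 <= elem_sym k (d 0) by rewrite sumr_ge0 // => J _; rewrite prodr_ge0.
have c_ge0 : 0 <= k%:R / expR 1 :> R by rewrite divr_ge0 ?expR_ge0.
apply: sqrt_mul_root_le; rewrite ?normr_ge0 // ger0_norm //.
apply: le_trans (ler_wpM2l (exprn_ge0 _ c_ge0) le_det_esym) _.
rewrite mulrA -[leRHS]mul1r ler_wpM2r ?sqr_ge0 //.
apply: le_trans (ler_wpM2r esym_ge0 (expn_div_expR1_le_fact R k)) _.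
by apply: le_trans (fact_mul_elem_sym_le k d_ge0) _; rewrite sum_d expr1n.
Qed.
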